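(* Let $A$ be a general metric space and $\mathrm{WFil}^*(A)$ the preorder of weakly flat filters on $A$ under the relation $\to$. Then: (a) every nonempty family of objects of $\mathrm{WFil}^*(A)$ has a least upper bound (colimit) in $\mathrm{WFil}^*(A)$; (b) the filters of forward Cauchy sequences are dense: every weakly flat filter $\mathcal F$ is a least upper bound in $\mathrm{WFil}^*(A)$ of the family of (filters of) forward Cauchy sequences $(x_n)$ with $(x_n)\to\mathcal F$; (c) the flat filters are exactly (up to isomorphism in $\mathrm{WFil}^*(A)$) the least upper bounds in $\mathrm{WFil}^*(A)$ of nonempty families $\mathcal S$ of (filters of) forward Cauchy sequences that are directed, i.e. for all $s,t\in\mathcal S$ there is $u\in\mathcal S$ with $s\to u$ and $t\to u$ (equivalently, colimits of functors with nonempty filtered domain taking values forward Cauchy sequences).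
   Context: A general metric space $A$ is a set with $A(-,-):A\times A\to[0,\infty]$, $A(x,x)=0$, $A(x,z)\le A(x,y)+A(y,z)$ (no symmetry). A filter on $A$ is a nonempty set of nonempty subsets closed under finite intersections and supersets. $\mathcal F$ is weakly flat iff for every $\epsilon>0$ there is $f\in\mathcal F$ such that for all $x\in f$ and all $g\in\mathcal F$ there is $y\in g$ with $A(x,y)\le\epsilon$; $\mathcal F$ is flat iff for every $\epsilon>0$ there is $f\in\mathcal F$ such that for every finite family $x_1,\dots,x_n\in f$ and every $g\in\mathcal F$ there is $y\in g$ with $A(x_i,y)\le\epsilon$ for all $i$. For weakly flat filters, $\mathcal F_1\to\mathcal F_2$ iff for every $\epsilon>0$ there is $f\in\mathcal F_1$ such that for every $x\in f$ and every $g\in\mathcal F_2$ there is $y\in g$ with $A(x,y)\le\epsilon$; this is a preorder. The filter of a sequence $(x_n)$ is generated by the tails $\{x_p:p\ge n\}$; $(x_n)$ is forward Cauchy iff for every $\epsilon>0$ there is $N$ with $A(x_n,x_m)\le\epsilon$ whenever $m\ge n\ge N$ (such filters are flat). *)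

(* distances take values in [0,+oo] = Coquelicot's Rbar. *)
From Stdlib Require Import Reals.
From Coquelicot Require Import Rbar.
Open Scope R_scope.

Definition gen_metric {A : Type} (d : A -> A -> Rbar) : Prop :=
  (forall x y, Rbar_le (Finite 0) (d x y)) /\
  (forall x, d x x = Finite 0) /\
  (forall x y z, Rbar_le (d x z) (Rbar_plus (d x y) (d y z))).

Definition is_filter {A : Type} (F : (A -> Prop) -> Prop) : Prop :=
  (exists f, F f) /\
  (forall f, F f -> exists x, f x) /\
  (forall f g, F f -> F g -> F (fun x => f x /\ g x)) /\
  (forall f g, F f -> (forall x, f x -> g x) -> F g).

Definition weakly_flat {A : Type} (d : A -> A -> Rbar)
  (F : (A -> Prop) -> Prop) : Prop :=
  forall eps : R, 0 < eps ->
    exists f, F f /\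
      forall x, f x -> forall g, F g -> exists y, g y /\ Rbar_le (d x y) (Finite eps).

Definition flat {A : Type} (d : A -> A -> Rbar)
  (F : (A -> Prop) -> Prop) : Prop :=
  forall eps : R, 0 < eps ->
    exists f, F f /\
      forall (xs : list A), (forall x, List.In x xs -> f x) ->
      forall g, F g -> exists y, g y /\
        forall x, List.In x xs -> Rbar_le (d x y) (Finite eps).

Definition arrow {A : Type} (d : A -> A -> Rbar)
  (F1 F2 : (A -> Prop) -> Prop) : Prop :=
  forall eps : R, 0 < eps ->
    exists f, F1 f /\
      forall x, f x -> forall g, F2 g -> exists y, g y /\ Rbar_le (d x y) (Finite eps).

Definition wfil {A : Type} (d : A -> A -> Rbar) (F : (A -> Prop) -> Prop) : Prop :=
  is_filter F /\ weakly_flat d F.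

Definition wfil_lub {A : Type} (d : A -> A -> Rbar) {I : Type}
  (Fs : I -> (A -> Prop) -> Prop) (G : (A -> Prop) -> Prop) : Prop :=
  wfil d G /\
  (forall i, arrow d (Fs i) G) /\
  (forall H, wfil d H -> (forall i, arrow d (Fs i) H) -> arrow d G H).

Definition seq_filter {A : Type} (x : nat -> A) : (A -> Prop) -> Prop :=
  fun P => exists n, forall p, (n <= p)%nat -> P (x p).

Definition forward_cauchy {A : Type} (d : A -> A -> Rbar) (x : nat -> A) : Prop :=
  forall eps : R, 0 < eps -> exists N, forall n m, (N <= n)%nat -> (n <= m)%nat ->
    Rbar_le (d (x n) (x m)) (Finite eps).

From Stdlib Require Import Reals Lra Lia ClassicalEpsilon List.
From Coquelicot Require Import Rbar.
Open Scope R_scope.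

(* Intersections of nonempty families of weakly flat filters are weakly flat and are
   their least upper bounds.

   Weak flatness of F yields a decreasing sequence of sets fs n in F whose points are
   2^-(n+1)-close to every member of F.  Stepping from fs n into fs (n+1) produces
   forward Cauchy "chains" that converge to F and, when started at a point of fs K,
   stay within 2^-K of it; hence F is the least upper bound of the chains.  If F is
   flat, three points of fs n can be moved simultaneously into fs (n+1), so any two
   chains are dominated by a third one and the family of chains is directed.

   Conversely, if F is the least upper bound of a directed family of forward Cauchy
   sequences, then F -> (intersection of their filters), so each point of a suitable
   set of F is eventually close to some sequence of the family; by directedness
   finitely many such points are eventually close to a single sequence s k, and
   s k -> F provides a common nearby point in any member of F. *)

Lemma guarded_choice {X Y : Type} (y0 : Y) (P : X -> Prop) (R : X -> Y -> Prop) :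
  (forall x, P x -> exists y, R x y) -> exists f : X -> Y, forall x, P x -> R x (f x).
Proof.
  intros H. apply (choice (fun x y => P x -> R x y)). intros x.
  destruct (classic (P x)) as [Hx | Hx].
  - destruct (H x Hx) as [y Hy]. exists y. auto.
  - exists y0. intros Hx'. contradiction.
Qed.

Lemma nat_dependent_choice {X : Type} (P : nat -> X -> Prop) (R : nat -> X -> X -> Prop)
    (x0 : X) :
  P 0%nat x0 -> (forall n x, P n x -> exists y, P (S n) y /\ R n x y) ->
  exists u : nat -> X, u 0%nat = x0 /\ forall n, P n (u n) /\ R n (u n) (u (S n)).
Proof.
  intros H0 Hstep.
  destruct (guarded_choice x0 (fun p : nat * X => P (fst p) (snd p))
              (fun p y => P (S (fst p)) y /\ R (fst p) (snd p) y)) as [next Hnext].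
  { intros [n x]. apply Hstep. }
  set (u := fix u n := match n with 0%nat => x0 | S m => next (m, u m) end).
  assert (Hu : forall n, P n (u n)).
  { induction n; [exact H0 | exact (proj1 (Hnext (n, u n) IHn))]. }
  exists u. split; [reflexivity |].
  intros n. split; [apply Hu | exact (proj2 (Hnext (n, u n) (Hu n)))].
Qed.

Lemma filter_decreasing_choice {A : Type} (F : (A -> Prop) -> Prop)
    (P : nat -> (A -> Prop) -> Prop) :
  is_filter F ->
  (forall n f g, P n f -> (forall x, g x -> f x) -> P n g) ->
  (forall n, exists f, F f /\ P n f) ->
  exists fs : nat -> A -> Prop,
    (forall n, F (fs n)) /\ (forall n x, fs (S n) x -> fs n x) /\ (forall n, P n (fs n)).
Proof.
  intros (_ & _ & Hinter & Hsup) Hanti Hex.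
  destruct (choice (fun n f => F f /\ P n f) Hex) as [ff Hff].
  exists (fun n x => forall k, (k <= n)%nat -> ff k x). split; [| split].
  - induction n.
    + apply (Hsup (ff 0%nat)); [apply Hff |].
      intros x Hx k Hk. replace k with 0%nat by lia. exact Hx.
    + apply (Hsup _ _ (Hinter _ _ IHn (proj1 (Hff (S n))))).
      intros x [Hx HxS] k Hk.
      destruct (Nat.eq_dec k (S n)) as [-> |]; [exact HxS | apply Hx; lia].
  - intros n x Hx k Hk. apply Hx. lia.
  - intros n. apply (Hanti n (ff n)); [apply Hff |]. intros x Hx. apply Hx. lia.
Qed.

Lemma pow_half_small (eps : R) :
  0 < eps -> exists K, forall n, (K <= n)%nat -> (/2) ^ n < eps.
Proof.
  intros Heps.
  destruct (pow_lt_1_zero (/2) ltac:(rewrite Rabs_pos_eq; lra) eps Heps) as [K HK].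
  exists K. intros n Hn. specialize (HK n Hn).
  rewrite Rabs_pos_eq in HK; [exact HK | apply pow_le; lra].
Qed.

Lemma directed_list_bound {I X : Type} (R : I -> I -> Prop) (P : X -> I -> Prop) (i0 : I) :
  (forall i j k, R i j -> R j k -> R i k) -> (forall i j, exists k, R i k /\ R j k) ->
  forall xs, (forall x, In x xs -> exists i, P x i) ->
  exists k, forall x, In x xs -> exists i, P x i /\ R i k.
Proof.
  intros Htrans Hdir. induction xs as [| x xs IH]; intros Hxs.
  - exists i0. intros z [].
  - destruct (IH (fun z Hz => Hxs z (or_intror Hz))) as [k Hk].
    destruct (Hxs x (or_introl eq_refl)) as [i Hi].
    destruct (Hdir i k) as [k' [Hik' Hkk']].
    exists k'. intros z [<- | Hz].
    + exists i. auto.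
    + destruct (Hk z Hz) as [j [Hj Hjk]].
      exists j. split; [exact Hj | exact (Htrans _ _ _ Hjk Hkk')].
Qed.

Definition gap (n : nat) : R := (/2) ^ S n.

Lemma gap_pos (n : nat) : 0 < gap n.
Proof. apply pow_lt. lra. Qed.

Lemma gap_antitone (k n : nat) : gap (k + n) <= gap n.
Proof.
  unfold gap. replace (S (k + n)) with (k + S n)%nat by lia. rewrite pow_add.
  assert (Hk : (/2) ^ k <= 1) by (rewrite <- (pow1 k); apply pow_incr; lra).
  assert (0 <= (/2) ^ S n) by (apply pow_le; lra).
  nra.
Qed.

Section GeneralMetric.

Context {A : Type} (d : A -> A -> Rbar) (Hd : gen_metric d).

(* [arrow d F G] is convertibly [forall eps, 0 < eps -> exists f, F f /\ approaches eps f G],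
   and [flat] is the same statement with [approaches_list]. *)
Definition approaches (eps : R) (f : A -> Prop) (G : (A -> Prop) -> Prop) : Prop :=
  forall x, f x -> forall g, G g -> exists y, g y /\ Rbar_le (d x y) (Finite eps).

Definition approaches_list (eps : R) (f : A -> Prop) (G : (A -> Prop) -> Prop) : Prop :=
  forall xs : list A, (forall x, In x xs -> f x) ->
  forall g, G g -> exists y, g y /\ forall x, In x xs -> Rbar_le (d x y) (Finite eps).

Definition ev_close (x : A) (s : nat -> A) (eps : R) : Prop :=
  exists N, forall n, (N <= n)%nat -> Rbar_le (d x (s n)) (Finite eps).

Definition filter_inter {I : Type} (Fs : I -> (A -> Prop) -> Prop) : (A -> Prop) -> Prop :=
  fun g => forall i, Fs i g.

Lemma approaches_of_list (eps : R) (f : A -> Prop) (G : (A -> Prop) -> Prop) :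
  approaches_list eps f G -> approaches eps f G.
Proof.
  intros Hf x Hx g Hg.
  destruct (Hf (x :: nil) ltac:(intros z [<- | []]; exact Hx) g Hg) as [y [Hy Hxy]].
  exists y. split; [exact Hy | apply Hxy; left; reflexivity].
Qed.

Lemma dist_triangle_le (x y z : A) (a b : R) :
  Rbar_le (d x y) (Finite a) -> Rbar_le (d y z) (Finite b) ->
  Rbar_le (d x z) (Finite (a + b)).
Proof.
  intros Hxy Hyz. destruct Hd as (_ & _ & Htri).
  eapply Rbar_le_trans; [apply (Htri x y z) |].
  exact (Rbar_plus_le_compat _ _ _ _ Hxy Hyz).
Qed.

Lemma arrow_trans (F1 F2 F3 : (A -> Prop) -> Prop) :
  arrow d F1 F2 -> arrow d F2 F3 -> arrow d F1 F3.
Proof.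
  intros H12 H23 eps Heps.
  destruct (H12 (eps / 2) ltac:(lra)) as [f1 [Hf1 P1]].
  destruct (H23 (eps / 2) ltac:(lra)) as [f2 [Hf2 P2]].
  exists f1. split; [exact Hf1 |]. intros x Hx g Hg.
  destruct (P1 x Hx f2 Hf2) as [y [Hy Hxy]].
  destruct (P2 y Hy g Hg) as [z [Hz Hyz]].
  exists z. split; [exact Hz |].
  replace eps with (eps / 2 + eps / 2) by lra. exact (dist_triangle_le _ _ _ _ _ Hxy Hyz).
Qed.

Lemma seq_filter_is_filter (x : nat -> A) : is_filter (seq_filter x).
Proof.
  split; [| split; [| split]].
  - exists (fun _ => True). exists 0%nat. auto.
  - intros f [n Hn]. exists (x n). apply Hn. lia.
  - intros f g [n Hn] [m Hm]. exists (Nat.max n m).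
    intros p Hp. split; [apply Hn | apply Hm]; lia.
  - intros f g [n Hn] Hfg. exists n. intros p Hp. apply Hfg, Hn, Hp.
Qed.

Lemma forward_cauchy_weakly_flat (x : nat -> A) :
  forward_cauchy d x -> weakly_flat d (seq_filter x).
Proof.
  intros Hx eps Heps. destruct (Hx eps Heps) as [N HN].
  exists (fun z => exists p, (N <= p)%nat /\ z = x p). split.
  - exists N. intros p Hp. eauto.
  - intros z [p [Hp ->]] g [m Hm]. exists (x (Nat.max p m)). split.
    + apply Hm. lia.
    + apply HN; lia.
Qed.

Lemma arrow_of_weakly_flat_sub (F G : (A -> Prop) -> Prop) :
  weakly_flat d F -> (forall g, G g -> F g) -> arrow d F G.
Proof.
  intros HF HGF eps Heps. destruct (HF eps Heps) as [f [Hf Pf]].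
  exists f. split; [exact Hf |]. intros x Hx g Hg. exact (Pf x Hx g (HGF g Hg)).
Qed.

Lemma arrow_filter_inter {I : Type} (Fs : I -> (A -> Prop) -> Prop) (H : (A -> Prop) -> Prop) :
  (forall i, is_filter (Fs i)) -> (forall i, arrow d (Fs i) H) -> arrow d (filter_inter Fs) H.
Proof.
  intros HFs HFH eps Heps.
  exists (fun x => exists i f, Fs i f /\ approaches eps f H /\ f x). split.
  - intros i. destruct (HFs i) as (_ & _ & _ & Hsup).
    destruct (HFH i eps Heps) as [f [Hf Pf]].
    apply (Hsup f); [exact Hf |]. intros x Hx. exists i, f. auto.
  - intros x (i & f & _ & Pf & Hx). exact (Pf x Hx).
Qed.

Lemma filter_inter_is_filter {I : Type} (Fs : I -> (A -> Prop) -> Prop) :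
  inhabited I -> (forall i, is_filter (Fs i)) -> is_filter (filter_inter Fs).
Proof.
  intros [i0] HFs. split; [| split; [| split]].
  - exists (fun _ => True). intros i. destruct (HFs i) as ([f Hf] & _ & _ & Hsup).
    apply (Hsup f); auto.
  - intros f Hf. destruct (HFs i0) as (_ & Hne & _). exact (Hne f (Hf i0)).
  - intros f g Hf Hg i. destruct (HFs i) as (_ & _ & Hinter & _). exact (Hinter f g (Hf i) (Hg i)).
  - intros f g Hf Hfg i. destruct (HFs i) as (_ & _ & _ & Hsup). exact (Hsup f g (Hf i) Hfg).
Qed.

Lemma filter_inter_wfil_lub {I : Type} (Fs : I -> (A -> Prop) -> Prop) :
  inhabited I -> (forall i, wfil d (Fs i)) -> wfil_lub d Fs (filter_inter Fs).
Proof.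
  intros HI HFs.
  assert (Hfil : forall i, is_filter (Fs i)) by (intros i; apply HFs).
  assert (Hup : forall i, arrow d (Fs i) (filter_inter Fs)).
  { intros i. apply arrow_of_weakly_flat_sub; [apply HFs |]. intros g Hg. exact (Hg i). }
  split; [split |].
  - exact (filter_inter_is_filter Fs HI Hfil).
  - exact (arrow_filter_inter Fs _ Hfil Hup).
  - split; [exact Hup |]. intros H _ HFH. exact (arrow_filter_inter Fs H Hfil HFH).
Qed.


Lemma seq_lub_of_ev_close {J : Type} (s : J -> nat -> A) (F : (A -> Prop) -> Prop) :
  wfil d F -> (forall j, arrow d (seq_filter (s j)) F) ->
  (forall eps, 0 < eps -> exists f, F f /\ forall x, f x -> exists j, ev_close x (s j) eps) ->
  wfil_lub d (fun j => seq_filter (s j)) F.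
Proof.
  intros HF HsF Happrox. split; [exact HF | split; [exact HsF |]].
  intros H _ HsH eps Heps.
  destruct (Happrox (eps / 2) ltac:(lra)) as [f [Hf Pf]].
  exists f. split; [exact Hf |]. intros x Hx h Hh.
  destruct (Pf x Hx) as [j [N HN]].
  destruct (HsH j (eps / 2) ltac:(lra)) as [P [[M HM] PP]].
  destruct (PP (s j (Nat.max N M)) (HM (Nat.max N M) ltac:(lia)) h Hh) as [y [Hy Hsy]].
  exists y. split; [exact Hy |]. replace eps with (eps / 2 + eps / 2) by lra.
  apply (dist_triangle_le _ (s j (Nat.max N M))); [apply HN; lia | exact Hsy].
Qed.

Section Chains.

Variables (F : (A -> Prop) -> Prop) (fs : nat -> A -> Prop).
Hypothesis HFfs : forall n, F (fs n).
Hypothesis Hfs_dec : forall n x, fs (S n) x -> fs n x.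
Hypothesis Hfs_gap : forall n, approaches (gap n) (fs n) F.

Definition chain_from (K : nat) (b : nat -> A) : Prop :=
  forall n, fs (K + n) (b n) /\ Rbar_le (d (b n) (b (S n))) (Finite (gap (K + n))).

Lemma fs_antitone (m n : nat) (x : A) : (m <= n)%nat -> fs n x -> fs m x.
Proof. induction 1; auto. Qed.

Lemma chain_from_dist (K : nat) (b : nat -> A) : chain_from K b ->
  forall n m, Rbar_le (d (b n) (b (n + m)%nat)) (Finite ((/2) ^ (K + n) - (/2) ^ (K + n + m))).
Proof.
  intros Hb n m. induction m as [| m IH].
  - rewrite !Nat.add_0_r. destruct Hd as (_ & Hzero & _). rewrite Hzero. simpl. lra.
  - replace ((/2) ^ (K + n) - (/2) ^ (K + n + S m))
      with ((/2) ^ (K + n) - (/2) ^ (K + n + m) + gap (K + (n + m))).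
    + rewrite <- plus_n_Sm. apply (dist_triangle_le _ _ _ _ _ IH), Hb.
    + unfold gap. replace (K + n + S m)%nat with (S (K + (n + m))) by lia.
      rewrite Nat.add_assoc. simpl. field.
Qed.

Lemma chain_from_dist_le (K : nat) (b : nat -> A) (n m : nat) : chain_from K b ->
  (n <= m)%nat -> Rbar_le (d (b n) (b m)) (Finite ((/2) ^ (K + n))).
Proof.
  intros Hb Hnm. replace m with (n + (m - n))%nat by lia.
  eapply Rbar_le_trans; [exact (chain_from_dist K b Hb n (m - n)) |].
  assert (0 < (/2) ^ (K + n + (m - n))) by (apply pow_lt; lra). simpl. lra.
Qed.

Lemma chain_from_chain (K : nat) (b : nat -> A) : chain_from K b -> chain_from 0 b.
Proof.
  intros Hb n. destruct (Hb n) as [Hfs Hgap]. split.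
  - exact (fs_antitone n (K + n) _ ltac:(lia) Hfs).
  - eapply Rbar_le_trans; [exact Hgap | apply gap_antitone].
Qed.

Lemma chain_forward_cauchy (b : nat -> A) : chain_from 0 b -> forward_cauchy d b.
Proof.
  intros Hb eps Heps. destruct (pow_half_small eps Heps) as [K HK].
  exists K. intros n m Hn Hm.
  eapply Rbar_le_trans; [exact (chain_from_dist_le 0 b n m Hb Hm) |].
  pose proof (HK n Hn). simpl. lra.
Qed.

Lemma chain_arrow (b : nat -> A) : chain_from 0 b -> arrow d (seq_filter b) F.
Proof.
  intros Hb eps Heps. destruct (pow_half_small eps Heps) as [K HK].
  exists (fun z => exists p, (K <= p)%nat /\ z = b p). split.
  - exists K. intros p Hp. eauto.
  - intros z [p [Hp ->]] g Hg.
    destruct (Hfs_gap p (b p) (proj1 (Hb p)) g Hg) as [y [Hy Hby]].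
    exists y. split; [exact Hy |]. eapply Rbar_le_trans; [exact Hby |].
    pose proof (HK (S p) ltac:(lia)). simpl. unfold gap. lra.
Qed.

Lemma chain_from_exists (K : nat) (x : A) : fs K x -> exists b, b 0%nat = x /\ chain_from K b.
Proof.
  intros Hx.
  destruct (nat_dependent_choice (fun n y => fs (K + n) y)
              (fun n y z => Rbar_le (d y z) (Finite (gap (K + n)))) x)
    as [b [Hb0 Hb]].
  - rewrite Nat.add_0_r. exact Hx.
  - intros n y Hy. rewrite <- plus_n_Sm.
    exact (Hfs_gap (K + n) y Hy (fs (S (K + n))) (HFfs _)).
  - exists b. split; [exact Hb0 |]. intros n. exact (Hb n).
Qed.

Lemma chains_approximate (eps : R) : 0 < eps ->
  exists f, F f /\ forall x, f x -> exists b, chain_from 0 b /\ ev_close x b eps.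
Proof.
  intros Heps. destruct (pow_half_small eps Heps) as [K HK].
  exists (fs K). split; [apply HFfs |]. intros x Hx.
  destruct (chain_from_exists K x Hx) as [b [Hb0 Hb]].
  exists b. split; [exact (chain_from_chain K b Hb) |].
  exists 0%nat. intros n _. rewrite <- Hb0.
  eapply Rbar_le_trans; [exact (chain_from_dist_le K b 0 n Hb ltac:(lia)) |].
  pose proof (HK (K + 0)%nat ltac:(lia)). simpl. lra.
Qed.

Lemma chain_inhabited : is_filter F -> inhabited {b | chain_from 0 b}.
Proof.
  intros (_ & Hne & _). destruct (Hne _ (HFfs 0%nat)) as [x Hx].
  destruct (chain_from_exists 0 x Hx) as [b [_ Hb]]. exact (inhabits (exist _ b Hb)).
Qed.

Theorem chains_lub : wfil d F ->
  wfil_lub d (fun b : {b | chain_from 0 b} => seq_filter (proj1_sig b)) F.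
Proof.
  intros HF. apply (seq_lub_of_ev_close (fun b : {b | chain_from 0 b} => proj1_sig b) F HF).
  - intros [b Hb]. exact (chain_arrow b Hb).
  - intros eps Heps. destruct (chains_approximate eps Heps) as [f [Hf Pf]].
    exists f. split; [exact Hf |]. intros x Hx.
    destruct (Pf x Hx) as [b [Hb Hxb]]. exists (exist _ b Hb). exact Hxb.
Qed.

Hypothesis Hfs_flat : forall n, approaches_list (gap n) (fs n) F.

Lemma arrow_of_shadowed (s u : nat -> A) : chain_from 0 u ->
  (forall p, Rbar_le (d (s p) (u (S p))) (Finite (gap p))) ->
  arrow d (seq_filter s) (seq_filter u).
Proof.
  intros Hu Hsu eps Heps. destruct (pow_half_small eps Heps) as [K HK].
  exists (fun z => exists p, (K <= p)%nat /\ z = s p). split.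
  - exists K. intros p Hp. eauto.
  - intros z [p [Hp ->]] g [m Hm]. exists (u (S p + m)%nat). split; [apply Hm; lia |].
    eapply Rbar_le_trans.
    + exact (dist_triangle_le _ _ _ _ _ (Hsu p)
               (chain_from_dist_le 0 u (S p) (S p + m) Hu ltac:(lia))).
    + pose proof (HK p Hp). unfold gap. simpl. lra.
Qed.

Lemma chains_directed (s t : nat -> A) : chain_from 0 s -> chain_from 0 t ->
  exists u, chain_from 0 u /\
    arrow d (seq_filter s) (seq_filter u) /\ arrow d (seq_filter t) (seq_filter u).
Proof.
  intros Hs Ht.
  destruct (nat_dependent_choice (fun n y => fs n y)
              (fun n y z => Rbar_le (d (s n) z) (Finite (gap n)) /\
                            Rbar_le (d (t n) z) (Finite (gap n)) /\
                            Rbar_le (d y z) (Finite (gap n))) (s 0%nat))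
    as [u [_ Hu]].
  - exact (proj1 (Hs 0%nat)).
  - intros n y Hy.
    destruct (Hfs_flat n (s n :: t n :: y :: nil)
                ltac:(intros z [<- | [<- | [<- | []]]]; [apply Hs | apply Ht | exact Hy])
                (fs (S n)) (HFfs _)) as [z [Hz Hclose]].
    exists z. split; [exact Hz |].
    split; [| split]; apply Hclose; simpl; auto.
  - assert (Hchain : chain_from 0 u).
    { intros n. destruct (Hu n) as (Hun & _ & _ & Hstep). split; assumption. }
    exists u. split; [exact Hchain |]. split.
    + apply (arrow_of_shadowed s u Hchain). intros p. apply (Hu p).
    + apply (arrow_of_shadowed t u Hchain). intros p. apply (Hu p).
Qed.

End Chains.

Lemma ev_close_of_arrow_inter {I : Type} (s : I -> nat -> A) (F : (A -> Prop) -> Prop) :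
  (forall i, forward_cauchy d (s i)) ->
  arrow d F (filter_inter (fun i => seq_filter (s i))) ->
  forall eps, 0 < eps -> exists f, F f /\ forall x, f x -> exists i, ev_close x (s i) eps.
Proof.
  intros Hs HF eps Heps. set (delta := eps / 2).
  destruct (HF delta ltac:(unfold delta; lra)) as [f [Hf Pf]].
  exists f. split; [exact Hf |]. intros x Hx.
  (* The delta-Cauchy tails of all the sequences form a member of every seq_filter. *)
  set (tails := fun y => exists i N,
          (forall n m, (N <= n)%nat -> (n <= m)%nat ->
             Rbar_le (d (s i n) (s i m)) (Finite delta)) /\
          exists p, (N <= p)%nat /\ y = s i p).
  assert (Htails : filter_inter (fun i => seq_filter (s i)) tails).
  { intros i. destruct (Hs i delta ltac:(unfold delta; lra)) as [N HN].
    exists N. intros p Hp. exists i, N. split; [exact HN |]. exists p. auto. }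
  destruct (Pf x Hx tails Htails) as [y [(i & N & HN & p & Hp & ->) Hxy]].
  exists i, p. intros n Hn. replace eps with (delta + delta) by (unfold delta; lra).
  apply (dist_triangle_le _ _ _ _ _ Hxy). apply HN; lia.
Qed.

Lemma ev_close_transfer (x : A) (s t : nat -> A) (c eps : R) : 0 < eps ->
  forward_cauchy d t -> arrow d (seq_filter s) (seq_filter t) ->
  ev_close x s c -> ev_close x t (c + eps).
Proof.
  intros Heps Ht Hst [Ns HNs]. set (delta := eps / 2).
  destruct (Ht delta ltac:(unfold delta; lra)) as [Nt HNt].
  destruct (Hst delta ltac:(unfold delta; lra)) as [P [[M HM] PP]].
  set (q := Nat.max Ns M).
  destruct (PP (s q) (HM q ltac:(unfold q; lia)) (fun z => exists r, (Nt <= r)%nat /\ z = t r)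
              ltac:(exists Nt; intros r Hr; exists r; auto)) as [y [[r [Hr ->]] Hsy]].
  exists r. intros n Hn. replace (c + eps) with (c + delta + delta) by (unfold delta; lra).
  apply (dist_triangle_le _ (t r)); [| apply HNt; lia].
  apply (dist_triangle_le _ (s q)); [apply HNs; unfold q; lia | exact Hsy].
Qed.

Lemma ev_close_list (xs : list A) (s : nat -> A) (c : R) :
  (forall x, In x xs -> ev_close x s c) ->
  exists N, forall n, (N <= n)%nat -> forall x, In x xs -> Rbar_le (d x (s n)) (Finite c).
Proof.
  induction xs as [| x xs IH]; intros Hxs.
  - exists 0%nat. intros n _ z [].
  - destruct (IH (fun z Hz => Hxs z (or_intror Hz))) as [N HN].
    destruct (Hxs x (or_introl eq_refl)) as [Nx HNx].
    exists (Nat.max N Nx). intros n Hn z [<- | Hz]; [apply HNx | apply HN]; auto; lia.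
Qed.


Lemma flat_of_directed_lub {I : Type} (s : I -> nat -> A) (F : (A -> Prop) -> Prop) :
  inhabited I -> (forall i, forward_cauchy d (s i)) ->
  (forall i j, exists k, arrow d (seq_filter (s i)) (seq_filter (s k)) /\
                         arrow d (seq_filter (s j)) (seq_filter (s k))) ->
  wfil_lub d (fun i => seq_filter (s i)) F -> flat d F.
Proof.
  intros HI Hs Hdir (_ & HsF & Hleast).
  assert (HF_inter : arrow d F (filter_inter (fun i => seq_filter (s i)))).
  { destruct (filter_inter_wfil_lub (fun i => seq_filter (s i)) HI) as (Hwfil & Hup & _).
    - intros i. split; [apply seq_filter_is_filter | apply forward_cauchy_weakly_flat, Hs].
    - exact (Hleast _ Hwfil Hup). }
  destruct HI as [i0].
  intros eps Heps. set (delta := eps / 3). assert (Hdelta : 0 < delta) by (unfold delta; lra).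
  destruct (ev_close_of_arrow_inter s F Hs HF_inter delta Hdelta) as [f [Hf Pf]].
  exists f. split; [exact Hf |]. intros xs Hxs g Hg.
  destruct (directed_list_bound (fun i j => arrow d (seq_filter (s i)) (seq_filter (s j)))
              (fun x i => ev_close x (s i) delta) i0
              (fun i j k => arrow_trans _ _ _) Hdir xs (fun x Hx => Pf x (Hxs x Hx)))
    as [k Hk].
  destruct (ev_close_list xs (s k) (delta + delta)) as [N HN].
  { intros x Hx. destruct (Hk x Hx) as [i [Hxi Hik]].
    exact (ev_close_transfer x (s i) (s k) delta delta Hdelta (Hs k) Hik Hxi). }
  destruct (HsF k delta Hdelta) as [P [[M HM] PP]].
  destruct (PP (s k (Nat.max N M)) (HM (Nat.max N M) ltac:(lia)) g Hg) as [y [Hy Hky]].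
  exists y. split; [exact Hy |]. intros x Hx.
  replace eps with (delta + delta + delta) by (unfold delta; lra).
  apply (dist_triangle_le _ (s k (Nat.max N M))); [apply HN; [lia | exact Hx] | exact Hky].
Qed.

Lemma wfil_lub_extend {I J : Type} (Fs : I -> (A -> Prop) -> Prop)
    (Gs : J -> (A -> Prop) -> Prop) (G : (A -> Prop) -> Prop) :
  wfil_lub d Fs G -> (forall i, exists j, Gs j = Fs i) -> (forall j, arrow d (Gs j) G) ->
  wfil_lub d Gs G.
Proof.
  intros (HG & _ & Hleast) Hsub HGs. split; [exact HG | split; [exact HGs |]].
  intros H HH HGsH. apply Hleast; [exact HH |].
  intros i. destruct (Hsub i) as [j <-]. exact (HGsH j).
Qed.

Lemma weakly_flat_scales (F : (A -> Prop) -> Prop) : is_filter F -> weakly_flat d F ->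
  exists fs : nat -> A -> Prop, (forall n, F (fs n)) /\ (forall n x, fs (S n) x -> fs n x) /\
    (forall n, approaches (gap n) (fs n) F).
Proof.
  intros HF Hw. apply (filter_decreasing_choice F (fun n f => approaches (gap n) f F) HF).
  - intros n f g Hf Hgf x Hx. exact (Hf x (Hgf x Hx)).
  - intros n. exact (Hw (gap n) (gap_pos n)).
Qed.

Lemma flat_scales (F : (A -> Prop) -> Prop) : is_filter F -> flat d F ->
  exists fs : nat -> A -> Prop, (forall n, F (fs n)) /\ (forall n x, fs (S n) x -> fs n x) /\
    (forall n, approaches_list (gap n) (fs n) F).
Proof.
  intros HF Hfl. apply (filter_decreasing_choice F (fun n f => approaches_list (gap n) f F) HF).
  - intros n f g Hf Hgf xs Hxs. apply Hf. intros x Hx. exact (Hgf x (Hxs x Hx)).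
  - intros n. exact (Hfl (gap n) (gap_pos n)).
Qed.

End GeneralMetric.

Theorem mainTheorem12 (A : Type) (d : A -> A -> Rbar) (Hd : gen_metric d) :
  (forall (I : Type) (Fs : I -> (A -> Prop) -> Prop),
     inhabited I -> (forall i, wfil d (Fs i)) ->
     exists G, wfil_lub d Fs G) /\
  (forall F, wfil d F ->
     wfil_lub d
       (fun s : {x : nat -> A | forward_cauchy d x /\ arrow d (seq_filter x) F} =>
          seq_filter (proj1_sig s))
       F) /\
  (forall F, wfil d F ->
     (flat d F <->
      exists (I : Type) (s : I -> nat -> A),
        inhabited I /\
        (forall i, forward_cauchy d (s i)) /\
        (forall i j, exists k, arrow d (seq_filter (s i)) (seq_filter (s k)) /\
                               arrow d (seq_filter (s j)) (seq_filter (s k))) /\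
        wfil_lub d (fun i => seq_filter (s i)) F)).
Proof.
  split; [| split].
  - intros I Fs HI HFs. exists (filter_inter Fs). exact (filter_inter_wfil_lub d Fs HI HFs).
  - intros F HF. destruct (weakly_flat_scales d F (proj1 HF) (proj2 HF))
      as (fs & HFfs & Hdec & Hgap).
    apply (wfil_lub_extend d _ _ F (chains_lub d Hd F fs HFfs Hdec Hgap HF)).
    + intros [b Hb].
      exists (exist _ b (conj (chain_forward_cauchy d Hd fs b Hb)
                              (chain_arrow d F fs Hgap b Hb))).
      reflexivity.
    + intros j. exact (proj2 (proj2_sig j)).
  - intros F HF. split.
    + intros Hflat. destruct (flat_scales d F (proj1 HF) Hflat) as (fs & HFfs & Hdec & Hlist).
      assert (Hgap : forall n, approaches d (gap n) (fs n) F)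
        by (intros n; apply approaches_of_list, Hlist).
      exists {b | chain_from d fs 0 b}, (@proj1_sig _ _).
      split; [exact (chain_inhabited d F fs HFfs Hgap (proj1 HF)) |].
      split; [intros [b Hb]; exact (chain_forward_cauchy d Hd fs b Hb) |].
      split; [| exact (chains_lub d Hd F fs HFfs Hdec Hgap HF)].
      intros [s Hs] [t Ht].
      destruct (chains_directed d Hd F fs HFfs Hlist s t Hs Ht) as (u & Hu & Hsu & Htu).
      exists (exist _ u Hu). split; assumption.
    + intros (I & s & HI & Hs & Hdir & Hlub). exact (flat_of_directed_lub d Hd s F HI Hs Hdir Hlub).
Qed.
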